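(* For any $n,L\geq 1$ and any random $n\times n$ matrix $X$ with entries in $\mathbb{Z}$, $$\mathbb{P}\Bigl(\exists\, Q\in\textstyle\bigcup_{\ell=2}^{L}\mathbb{O}_n(\ell,\mathbb{Q}):\ Q^{T}XQ\in\mathbb{Z}^{n\times n}\Bigr)\leq\frac{1}{2^n n!}\sum_{\ell=2}^{L}\mathbb{E}[N_n(\ell)].$$
   Context: The level of a rational matrix $Q$ is the least integer $\ell\geq 1$ with $\ell Q$ having integer entries. $\mathbb{O}_n(\ell,\mathbb{Q})$ denotes the set of all rational orthogonal $n\times n$ matrices with level $\ell$. For $X\in\mathbb{Z}^{n\times n}$, $N_n(\ell)=\#\{Q\in\mathbb{O}_n(\ell,\mathbb{Q}): Q^{T}XQ\in\mathbb{Z}^{n\times n}\}$. *)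

From HB Require Import structures.
From mathcomp Require Import all_boot all_order all_algebra.
From mathcomp Require Import all_classical all_reals all_analysis.
Import Order.TTheory GRing.Theory Num.Theory.
Local Open Scope classical_set_scope.
Local Open Scope ring_scope.

Definition int_mx {m k : nat} (A : 'M[rat]_(m, k)) : Prop :=
  forall i j, A i j \is a Num.int.

Definition rat_orthogonal {n : nat} (Q : 'M[rat]_n) : Prop :=
  Q^T *m Q = 1%:M.

Definition has_level {n : nat} (Q : 'M[rat]_n) (l : nat) : Prop :=
  (1 <= l)%N /\ int_mx (l%:R *: Q) /\
  (forall k : nat, (1 <= k)%N -> (k < l)%N -> ~ int_mx (k%:R *: Q)).

Definition On (n l : nat) : set 'M[rat]_n :=
  [set Q | rat_orthogonal Q /\ has_level Q l].

Definition ratmx {n : nat} (X : 'M[int]_n) : 'M[rat]_n := map_mx (fun z : int => z%:~R) X.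

Definition Nn (R : realType) (n l : nat) (X : 'M[int]_n) : \bar R :=
  \esum_(Q in [set Q | On n l Q /\ int_mx (Q^T *m ratmx X *m Q)]) 1%E.

(* If Q has level l and conjugates X into an integral matrix, then so does
   Q S for each of the 2^n n! signed permutation matrices S, and these are
   pairwise distinct.  Hence on the event in question some N_n(l) is at least
   2^n n!, and the bound is Markov's inequality for the sum of the N_n(l). *)
From HB Require Import structures.
From mathcomp Require Import all_boot all_order all_algebra.
From mathcomp Require Import all_classical all_reals all_analysis.
From mathcomp Require Import measurable_realfun fingroup perm.
Set Implicit Arguments.
Unset Strict Implicit.
Unset Printing Implicit Defensive.

Import Order.TTheory GRing.Theory Num.Theory.
Local Open Scope classical_set_scope.
Local Open Scope ring_scope.

Lemma int_mxM m k p (A : 'M[rat]_(m, k)) (B : 'M[rat]_(k, p)) :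
  int_mx A -> int_mx B -> int_mx (A *m B).
Proof. by move=> intA intB i j; rewrite mxE rpred_sum // => l _; apply: rpredM. Qed.

Lemma int_mx_tr m k (A : 'M[rat]_(m, k)) : int_mx A -> int_mx A^T.
Proof. by move=> intA i j; rewrite mxE. Qed.

Section SignedPermutation.

Variable n : nat.

Definition signed_perm : finType := prod {ffun 'I_n -> bool} {perm 'I_n}.

Definition signed_perm_mx {R : pzRingType} (s : signed_perm) : 'M[R]_n :=
  diag_mx (\row_i (-1) ^+ s.1 i) *m perm_mx s.2.

Lemma signed_perm_mxE (R : pzRingType) s i j :
  (signed_perm_mx s : 'M[R]_n) i j = (-1) ^+ s.1 i * (s.2 i == j)%:R.
Proof. by rewrite /signed_perm_mx mul_diag_mx !mxE. Qed.

Lemma card_signed_perm : #|signed_perm| = (2 ^ n * n`!)%N.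
Proof. by rewrite card_prod card_ffun card_bool card_ord card_Sn. Qed.

Lemma signed_perm_mx_orthogonal (R : comPzRingType) s :
  (signed_perm_mx s : 'M[R]_n)^T *m signed_perm_mx s = 1%:M.
Proof.
rewrite /signed_perm_mx trmx_mul tr_diag_mx tr_perm_mx -mulmxA.
rewrite (mulmxA (diag_mx _)) [diag_mx _ *m _](_ : _ = 1%:M) ?mul1mx.
  by rewrite -perm_mxM mulVg perm_mx1.
apply/matrixP => i j; rewrite mul_diag_mx !mxE.
by case: (i == j); rewrite ?mulr0n ?mulr0 // mulr1n -expr2 sqrr_sign.
Qed.

Lemma signed_perm_mx_inj (R : numDomainType) : injective (@signed_perm_mx R).
Proof.
move=> [e1 s1] [e2 s2] /matrixP eq_mx.
have eq_s i : s1 i = s2 i.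
  move: (eq_mx i (s1 i)); rewrite !signed_perm_mxE /= eqxx mulr1.
  by case: eqP => // _; rewrite mulr0 => /eqP; rewrite signr_eq0.
have eq_e i : e1 i = e2 i.
  by move: (eq_mx i (s1 i)); rewrite !signed_perm_mxE /= eq_s eqxx !mulr1 => /signr_inj.
by congr pair; [apply/ffunP => i | apply/permP => i].
Qed.

Lemma int_signed_perm_mx s : int_mx (signed_perm_mx s : 'M[rat]_n).
Proof. by move=> i j; rewrite signed_perm_mxE rpredM ?rpred_nat ?rpredX ?rpredN1. Qed.

End SignedPermutation.

Lemma On_mulmx_int_orthogonal n l (Q U : 'M[rat]_n) :
  rat_orthogonal U -> int_mx U -> On n l Q -> On n l (Q *m U).
Proof.
move=> orthU intU [orthQ [l_gt0 [intlQ l_min]]].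
have UUt : U *m U^T = 1%:M by apply: mulmx1C.
split; last split=> //; last split.
- by rewrite /rat_orthogonal trmx_mul -mulmxA (mulmxA Q^T) orthQ mul1mx.
- by rewrite scalemxAl; apply: int_mxM.
move=> k k_gt0 k_lt_l intkQU; apply: (l_min k k_gt0 k_lt_l).
rewrite -[Q]mulmx1 -UUt mulmxA scalemxAl.
by apply: int_mxM => //; apply: int_mx_tr.
Qed.

Lemma int_mx_conj_mulmx n (Q U M : 'M[rat]_n) : int_mx U ->
  int_mx (Q^T *m M *m Q) -> int_mx ((Q *m U)^T *m M *m (Q *m U)).
Proof.
move=> intU intQMQ.
have -> : (Q *m U)^T *m M *m (Q *m U) = U^T *m (Q^T *m M *m Q) *m U.
  by rewrite trmx_mul !mulmxA.
by apply: int_mxM => //; apply: int_mxM => //; apply: int_mx_tr.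
Qed.

Lemma card_signed_perm_le_Nn {R : realType} n l (X : 'M[int]_n) (Q : 'M[rat]_n) :
  On n l Q -> int_mx (Q^T *m ratmx X *m Q) ->
  (((2 ^ n * n`!)%:R : R)%:E <= Nn R n l X)%E.
Proof.
move=> OnQ intQXQ; apply: esum_ge.
pose orbit (s : signed_perm n) := Q *m signed_perm_mx s.
exists (orbit @` setT).
  split; first exact: finite_image.
  move=> _ [s _ <-]; split.
    apply: On_mulmx_int_orthogonal => //; first exact: signed_perm_mx_orthogonal.
    exact: int_signed_perm_mx.
  by apply: int_mx_conj_mulmx => //; apply: int_signed_perm_mx.
have inj_orbit : set_inj setT orbit.
  move=> s1 s2 _ _ /(congr1 (mulmx Q^T)); rewrite !mulmxA.
  by case: OnQ => -> _; rewrite !mul1mx => /signed_perm_mx_inj.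
rewrite fsbig_image // (_ : setT = [set` enum (signed_perm n)]); last first.
  by apply/seteqP; split => s //= _; rewrite mem_enum.
rewrite -fsbig_seq ?enum_uniq // -card_signed_perm cardE sumEFin.
by rewrite big_const_seq count_predT iter_addr addr0.
Qed.

Section CountableValued.

Context {d : measure_display} {T : measurableType d} {C : countType} {X : T -> C}.
Hypothesis measurable_fibre : forall c, measurable (X @^-1` [set c]).

Lemma measurable_preimage_count (A : set C) : measurable (X @^-1` A).
Proof.
pose fibre k := if unpickle k is Some c then X @^-1` [set c] else set0.
rewrite (_ : X @^-1` A = \bigcup_(k in pickle @` A) fibre k); last first.
  rewrite bigcup_image /fibre; apply/seteqP; split => [w Aw | w [c Ac]].
    by exists (X w) => //; rewrite pickleK.
  by rewrite pickleK /= => ->.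
apply: bigcup_measurable => _ [c _ <-].
by rewrite /fibre pickleK; apply: measurable_fibre.
Qed.

Lemma measurable_fun_comp_count (R : realType) (g : C -> \bar R) :
  measurable_fun [set: T] (g \o X).
Proof. by move=> _ Y _; rewrite setTI; apply: (measurable_preimage_count (g @^-1` Y)). Qed.

End CountableValued.

Lemma markov_lower_bound d (T : measurableType d) (R : realType)
    (mu : {measure set T -> \bar R}) (E : set T) (f : T -> \bar R) (c : R) :
  measurable E -> measurable_fun [set: T] f -> (forall w, (0 <= f w)%E) ->
  0 < c -> (forall w, E w -> (c%:E <= f w)%E) ->
  (mu E <= c^-1%:E * \int[mu]_w f w)%E.
Proof.
move=> mE mf f_ge0 c_gt0 f_ge_c.
have c_inv_ge0 : 0 <= c^-1 by rewrite invr_ge0 ltW.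
rewrite -ge0_integralZl_EFin // -[E]setIT -integral_indic //.
apply: ge0_le_integral => //.
- by apply/measurable_EFinP; apply: measurable_indic.
- by apply: measurable_funeM.
move=> w _; rewrite indicE; have [/set_mem Ew | _] := boolP (w \in E).
  apply: le_trans (lee_wpmul2l _ (f_ge_c w Ew)); rewrite ?lee_fin //.
  by rewrite mulVf ?gt_eqF.
by rewrite mule_ge0.
Qed.

Theorem lemma3p6 (R : realType) (d : measure_display) (T : measurableType d)
  (P : probability T R) (n L : nat) (hn : (1 <= n)%N) (hL : (1 <= L)%N)
  (X : T -> 'M[int]_n)
  (hX : forall M : 'M[int]_n, measurable (X @^-1` [set M])) :
  (P [set w | exists l : nat, (2 <= l <= L)%N /\
       exists Q : 'M[rat]_n, On n l Q /\ int_mx (Q^T *m ratmx (X w) *m Q)]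
   <= ((2 ^ n * n`!)%:R^-1 : R)%:E *
      \sum_(2 <= l < L.+1) \int[P]_w (Nn R n l (X w)))%E.
Proof.
have Nn_ge0 l M : (0 <= Nn R n l M)%E by apply: esum_ge0.
rewrite -ge0_integral_sum //; last by move=> l; apply: measurable_fun_comp_count.
apply: markov_lower_bound.
- exact: (measurable_preimage_count hX [set M | exists l, (2 <= l <= L)%N /\
    exists Q, On n l Q /\ int_mx (Q^T *m ratmx M *m Q)]).
- exact: (measurable_fun_comp_count hX (fun M => \sum_(2 <= l < L.+1) Nn R n l M)%E).
- by move=> w; apply: sume_ge0.
- by rewrite ltr0n muln_gt0 expn_gt0 fact_gt0.
move=> w [l [l_range [Q [OnQ intQXQ]]]].
apply: le_trans (card_signed_perm_le_Nn OnQ intQXQ) _.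
rewrite (bigD1_seq l) ?mem_index_iota ?iota_uniq //=.
by rewrite leeDl // sume_ge0.
Qed.
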